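(* Let $\underline{c}=\{c_n,n\ge1\}$ be positive reals with $c_n\to c\ge1$. Let $\{\varphi_n,n\ge1\}$ be a sequence of real numbers which is $\underline{c}$-subadditive, i.e. $$\varphi_{n_1+\dots+n_k}\le c_{n_1+\dots+n_k}(\varphi_{n_1}+\dots+\varphi_{n_k})$$ for all positive integers $n_1,\dots,n_k$ and all $k\ge1$. Then $$\inf_{n\ge1}\frac{\varphi_n}{n}\le\liminf_{n\to\infty}\frac{\varphi_n}{n}\le\limsup_{n\to\infty}\frac{\varphi_n}{n}\le c^2\inf_{n\ge1}\frac{\varphi_n}{n}.$$ *)

From Stdlib Require Import Reals Lra Lia List.
Open Scope R_scope.

Inductive Rbar : Type := Finite (r : R) | p_infty | m_infty.

Definition Rbar_le (x y : Rbar) : Prop :=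
  match x, y with
  | m_infty, _ => True
  | _, p_infty => True
  | p_infty, _ => False
  | _, m_infty => False
  | Finite a, Finite b => a <= b
  end.

Definition Rbar_scale (k : R) (x : Rbar) : Rbar :=
  match x with
  | Finite r => Finite (k * r)
  | p_infty => p_infty
  | m_infty => m_infty
  end.

Definition is_inf_pos (u : nat -> R) (l : Rbar) : Prop :=
  (forall n, (1 <= n)%nat -> Rbar_le l (Finite (u n))) /\
  (forall m : Rbar, (forall n, (1 <= n)%nat -> Rbar_le m (Finite (u n))) -> Rbar_le m l).

Definition is_liminf (u : nat -> R) (l : Rbar) : Prop :=
  match l with
  | Finite a => forall eps, 0 < eps ->
      (exists N, forall n, (N <= n)%nat -> a - eps < u n) /\
      (forall N, exists n, (N <= n)%nat /\ u n < a + eps)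
  | p_infty => forall M, exists N, forall n, (N <= n)%nat -> M < u n
  | m_infty => forall M N, exists n, (N <= n)%nat /\ u n < M
  end.

Definition is_limsup (u : nat -> R) (l : Rbar) : Prop :=
  match l with
  | Finite a => forall eps, 0 < eps ->
      (exists N, forall n, (N <= n)%nat -> u n < a + eps) /\
      (forall N, exists n, (N <= n)%nat /\ a - eps < u n)
  | p_infty => forall M N, exists n, (N <= n)%nat /\ M < u n
  | m_infty => forall M, exists N, forall n, (N <= n)%nat -> u n < M
  end.

Definition Rsum_list (l : list R) : R := fold_right Rplus 0 l.

Definition c_subadditive (c phi : nat -> R) : Prop :=
  forall l : list nat, l <> nil -> (forall m, In m l -> (1 <= m)%nat) ->
    phi (list_sum l) <= c (list_sum l) * Rsum_list (map phi l).

From Stdlib Require Import Reals Lra Lia List.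
Open Scope R_scope.

(* Fix m and a multiple K = k m with c_K close to c.  Splitting n = q K + r
   into q blocks of size K and r blocks of size 1 gives
     phi_n / n <= c_n ((1 - r/n) phi_K / K + (r/n) phi_1),
   while splitting K into k blocks of size m gives phi_K / K <= c_K phi_m / m.
   As n -> oo, r/n -> 0 and c_n -> c, so eventually
   phi_n / n <= c c_K phi_m / m + eps ~ c^2 phi_m / m + eps. *)

Lemma list_sum_repeat (a k : nat) : list_sum (repeat a k) = (k * a)%nat.
Proof. induction k as [|k IH]; simpl; lia. Qed.

Lemma Rsum_list_repeat (x : R) (k : nat) : Rsum_list (repeat x k) = INR k * x.
Proof.
  induction k as [|k IH]; unfold Rsum_list in *; [simpl; ring|].
  cbn [repeat fold_right]; rewrite IH, S_INR; ring.
Qed.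

Lemma Rsum_list_app (l1 l2 : list R) :
  Rsum_list (l1 ++ l2) = Rsum_list l1 + Rsum_list l2.
Proof. induction l1 as [|x l IH]; unfold Rsum_list in *; simpl; [|rewrite IH]; ring. Qed.

Lemma Un_cv_const (x : R) : Un_cv (fun _ => x) x.
Proof. intros e He; exists 0%nat; intros; rewrite R_dist_eq; exact He. Qed.

Lemma Un_cv_mod_div (K : nat) : (1 <= K)%nat ->
  Un_cv (fun n => INR (n mod K) / INR n) 0.
Proof.
  intros HK e He.
  destruct (INR_unbounded (INR K / e)) as [N HN].
  exists (S N); intros n Hn; unfold R_dist.
  assert (HrK : INR (n mod K) < INR K) by (apply lt_INR, Nat.mod_upper_bound; lia).
  assert (HNn : INR N < INR n) by (apply lt_INR; lia).
  assert (Hr0 : 0 <= INR (n mod K)) by apply pos_INR.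
  assert (Hn0 : 0 < INR n) by (apply lt_0_INR; lia).
  assert (HKe : INR K < e * INR n).
  { apply (Rmult_lt_reg_r (/ e)); [now apply Rinv_0_lt_compat|].
    replace (e * INR n * / e) with (INR n) by (field; lra).
    unfold Rdiv in HN; lra. }
  rewrite Rminus_0_r, Rabs_pos_eq by (apply Rmult_le_pos; [|left; apply Rinv_0_lt_compat]; lra).
  apply (Rmult_lt_reg_r (INR n)); [exact Hn0|].
  unfold Rdiv; rewrite Rmult_assoc, Rinv_l by lra; lra.
Qed.

Section SubadditiveRatio.

Variables (c phi : nat -> R) (cl : R).
Hypothesis hcpos : forall n, (1 <= n)%nat -> 0 < c n.
Hypothesis hcv : Un_cv c cl.
Hypothesis hsub : c_subadditive c phi.

Lemma c_subadditive_repeat_app (K q r : nat) : (1 <= K)%nat -> (1 <= q)%nat ->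
  phi (q * K + r)%nat <= c (q * K + r)%nat * (INR q * phi K + INR r * phi 1%nat).
Proof.
  intros HK Hq.
  pose proof (hsub (repeat K q ++ repeat 1%nat r)) as H.
  rewrite list_sum_app, !list_sum_repeat, map_app, !map_repeat, Rsum_list_app,
    !Rsum_list_repeat, Nat.mul_1_r in H.
  apply H.
  - destruct q; [lia|discriminate].
  - intros x Hx; apply in_app_or in Hx.
    destruct Hx as [Hx|Hx]; apply repeat_spec in Hx; lia.
Qed.

Lemma ratio_mul_le (k m : nat) : (1 <= k)%nat -> (1 <= m)%nat ->
  phi (k * m)%nat / INR (k * m) <= c (k * m)%nat * (phi m / INR m).
Proof.
  intros Hk Hm.
  pose proof (c_subadditive_repeat_app m k 0 Hm Hk) as H.
  rewrite Nat.add_0_r, Rmult_0_l, Rplus_0_r in H.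
  assert (Hk0 : 0 < INR k) by (apply lt_0_INR; lia).
  assert (Hm0 : 0 < INR m) by (apply lt_0_INR; lia).
  rewrite mult_INR.
  replace (c (k * m)%nat * (phi m / INR m))
    with (c (k * m)%nat * (INR k * phi m) / (INR k * INR m)) by (field; lra).
  apply Rmult_le_compat_r; [left; apply Rinv_0_lt_compat; nra | exact H].
Qed.

Lemma ratio_le_divmod (K n : nat) : (1 <= K)%nat -> (K <= n)%nat ->
  let w := INR (n mod K) / INR n in
  phi n / INR n <= c n * ((1 - w) * (phi K / INR K) + w * phi 1%nat).
Proof.
  intros HK HKn w.
  set (q := (n / K)%nat); set (r := (n mod K)%nat).
  assert (Hn : n = (q * K + r)%nat)
    by (unfold q, r; rewrite (Nat.div_mod_eq n K) at 1; lia).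
  assert (Hq : (1 <= q)%nat) by (apply Nat.div_le_lower_bound; lia).
  assert (HnR : INR n = INR q * INR K + INR r)
    by (rewrite Hn at 1; rewrite plus_INR, mult_INR; ring).
  pose proof (c_subadditive_repeat_app K q r HK Hq) as H; rewrite <- Hn in H.
  assert (Hn0 : 0 < INR n) by (apply lt_0_INR; lia).
  assert (HK0 : 0 < INR K) by (apply lt_0_INR; lia).
  replace (c n * ((1 - w) * (phi K / INR K) + w * phi 1%nat))
    with (c n * (INR q * phi K + INR r * phi 1%nat) / INR n)
    by (unfold w; fold r; rewrite HnR; field; lra).
  apply Rmult_le_compat_r; [left; apply Rinv_0_lt_compat|]; lra.
Qed.

Lemma eventually_ratio_lt (K : nat) (B eps : R) :
  (1 <= K)%nat -> phi K / INR K <= B -> 0 < eps ->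
  exists N, forall n, (N <= n)%nat -> phi n / INR n < cl * B + eps.
Proof.
  intros HK HB He.
  set (w := fun n => INR (n mod K) / INR n).
  set (E := fun n => c n * ((1 - w n) * B + w n * phi 1%nat)).
  assert (HE : Un_cv E (cl * ((1 - 0) * B + 0 * phi 1%nat))).
  { apply CV_mult; [exact hcv|].
    apply CV_plus; apply CV_mult; try apply Un_cv_const.
    - apply CV_minus; [apply Un_cv_const | now apply Un_cv_mod_div].
    - now apply Un_cv_mod_div. }
  destruct (HE eps He) as [N HN].
  exists (Nat.max N K); intros n Hn.
  specialize (HN n ltac:(lia)); unfold R_dist in HN; apply Rabs_def2 in HN.
  assert (Hw1 : w n <= 1).
  { assert (Hn0 : 0 < INR n) by (apply lt_0_INR; lia).
    assert (INR (n mod K) <= INR n) by apply le_INR, Nat.Div0.mod_le.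
    unfold w; apply (Rmult_le_reg_r (INR n)); [exact Hn0|].
    unfold Rdiv; rewrite Rmult_assoc, Rinv_l; lra. }
  assert (Hcn : 0 < c n) by (apply hcpos; lia).
  assert (phi n / INR n <= E n).
  { eapply Rle_trans; [apply (ratio_le_divmod K n HK ltac:(lia))|].
    apply Rmult_le_compat_l; [lra|].
    apply Rplus_le_compat_r, Rmult_le_compat_l; lra. }
  lra.
Qed.

Lemma eventually_ratio_lt_sq (m : nat) (eps : R) : (1 <= m)%nat -> 0 < eps ->
  exists N, forall n, (N <= n)%nat -> phi n / INR n < cl ^ 2 * (phi m / INR m) + eps.
Proof.
  intros Hm He.
  set (v := phi m / INR m).
  set (A := Rabs (cl * v)).
  assert (HA : 0 <= A) by apply Rabs_pos.
  set (e := eps / (2 * (A + 1))).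
  assert (He0 : 0 < e) by (apply Rdiv_lt_0_compat; lra).
  assert (HeA : e * (2 * (A + 1)) = eps) by (unfold e; field; lra).
  destruct (hcv e He0) as [N0 HN0].
  set (K := (S N0 * m)%nat).
  assert (HcK : Rabs (c K - cl) < e) by (apply HN0; unfold K; nia).
  assert (Hclose : cl * (c K * v) < cl ^ 2 * v + eps / 2).
  { assert (Hdev : cl * (c K * v) - cl ^ 2 * v <= A * Rabs (c K - cl)).
    { replace (cl * (c K * v) - cl ^ 2 * v) with (cl * v * (c K - cl)) by ring.
      unfold A; rewrite <- Rabs_mult; apply Rle_abs. }
    assert (A * Rabs (c K - cl) <= A * e) by (apply Rmult_le_compat_l; lra).
    nra. }
  destruct (eventually_ratio_lt K (c K * v) (eps / 2)) as [N HN].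
  - unfold K; lia.
  - apply ratio_mul_le; lia.
  - lra.
  - exists N; intros n Hn; specialize (HN n Hn); lra.
Qed.

End SubadditiveRatio.

Section ExtendedLimits.

Variable u : nat -> R.

Lemma inf_pos_le_liminf (i li : Rbar) :
  is_inf_pos u i -> is_liminf u li -> Rbar_le i li.
Proof.
  intros [hi _] hli.
  assert (Hi : i <> p_infty) by (intros ->; exact (hi 1%nat (le_n 1))).
  destruct li as [a| |]; destruct i as [b| |]; simpl; auto; try congruence.
  - destruct (Rle_lt_dec b a) as [|Hab]; [assumption|].
    destruct (hli (b - a) ltac:(lra)) as [_ H].
    destruct (H 1%nat) as [n [Hn Hu]]; specialize (hi n Hn); simpl in hi; lra.
  - destruct (hli b 1%nat) as [n [Hn Hu]]; specialize (hi n Hn); simpl in hi; lra.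
Qed.

Lemma liminf_le_limsup (li ls : Rbar) :
  is_liminf u li -> is_limsup u ls -> Rbar_le li ls.
Proof.
  intros hli hls.
  assert (Hsep : forall a b N1 N2,
    (forall n, (N1 <= n)%nat -> a < u n) ->
    (forall n, (N2 <= n)%nat -> u n < b) -> a < b).
  { intros a b N1 N2 H1 H2.
    specialize (H1 (N1 + N2)%nat ltac:(lia)); specialize (H2 (N1 + N2)%nat ltac:(lia)); lra. }
  destruct li as [a| |]; destruct ls as [b| |]; simpl; auto.
  - destruct (Rle_lt_dec a b) as [|Hba]; [assumption|].
    destruct (hli ((a - b) / 2) ltac:(lra)) as [[N1 H1] _].
    destruct (hls ((a - b) / 2) ltac:(lra)) as [[N2 H2] _].
    pose proof (Hsep _ _ _ _ H1 H2); lra.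
  - destruct (hli 1 Rlt_0_1) as [[N1 H1] _]; destruct (hls (a - 1)) as [N2 H2].
    pose proof (Hsep _ _ _ _ H1 H2); lra.
  - destruct (hli (b + 1)) as [N1 H1]; destruct (hls 1 Rlt_0_1) as [[N2 H2] _].
    pose proof (Hsep _ _ _ _ H1 H2); lra.
  - destruct (hli 0) as [N1 H1]; destruct (hls 0) as [N2 H2].
    pose proof (Hsep _ _ _ _ H1 H2); lra.
Qed.

Lemma limsup_le_scale_inf_pos (k : R) (i ls : Rbar) : 0 < k ->
  (forall m eps, (1 <= m)%nat -> 0 < eps ->
     exists N, forall n, (N <= n)%nat -> u n < k * u m + eps) ->
  is_inf_pos u i -> is_limsup u ls -> Rbar_le ls (Rbar_scale k i).
Proof.
  intros Hk Hev [_ hinf] hls.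
  destruct ls as [a| |].
  - assert (Hbound : forall m, (1 <= m)%nat -> a <= k * u m).
    { intros m Hm.
      destruct (Rle_lt_dec a (k * u m)) as [|Hlt]; [assumption|].
      set (e := (a - k * u m) / 2).
      destruct (Hev m e Hm ltac:(unfold e; lra)) as [N HN].
      destruct (hls e ltac:(unfold e; lra)) as [_ H].
      destruct (H N) as [n [Hn Hu]]; specialize (HN n Hn); unfold e in *; lra. }
    assert (Hlow : Rbar_le (Finite (a / k)) i).
    { apply hinf; intros n Hn; simpl.
      apply (Rmult_le_reg_r k); [exact Hk|].
      replace (a / k * k) with a by (field; lra).
      rewrite Rmult_comm; auto. }
    destruct i as [b| |]; simpl in *; auto.
    replace a with (k * (a / k)) by (field; lra).
    apply Rmult_le_compat_l; lra.
  - destruct (Hev 1%nat 1 (le_n 1) Rlt_0_1) as [N HN].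
    destruct (hls (k * u 1%nat + 1) N) as [n [Hn Hu]].
    specialize (HN n Hn); lra.
  - exact I.
Qed.

End ExtendedLimits.

Theorem mainTheorem7 (c phi : nat -> R) (cl : R)
  (hcpos : forall n, (1 <= n)%nat -> 0 < c n)
  (hcv : Un_cv c cl) (hcl : 1 <= cl)
  (hsub : c_subadditive c phi)
  (i li ls : Rbar)
  (hi : is_inf_pos (fun n => phi n / INR n) i)
  (hli : is_liminf (fun n => phi n / INR n) li)
  (hls : is_limsup (fun n => phi n / INR n) ls) :
  Rbar_le i li /\ Rbar_le li ls /\ Rbar_le ls (Rbar_scale (cl ^ 2) i).
Proof.
  split; [|split].
  - exact (inf_pos_le_liminf _ _ _ hi hli).
  - exact (liminf_le_limsup _ _ _ hli hls).
  - apply (limsup_le_scale_inf_pos _ _ _ _ (pow_lt cl 2 ltac:(lra))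
             (eventually_ratio_lt_sq c phi cl hcpos hcv hsub) hi hls).
Qed.
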